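(* Let $N\ge 2$, $1\le K\le N-1$, $Z>0$ and $\delta>0$. Let $$U(x)=\sum_{j=1}^N-\frac{Z}{|x_j|}+\sum_{j\neq k}\frac{1}{|x_j-x_k|}.$$ Then for every $x\in\Omega$: - if $|x|_{N-K}>\delta|x|_{N-K+1}$, then $$U(x)\ge U_{N-K-1}(x)-\frac{Z}{\delta|x|_{N-K+1}}-\sum_{j=N-K+1}^N\frac{Z}{|x|_j};$$ - if $|x|_{N-K}<\delta|x|_{N-K+1}$, then $$U(x)\ge U_{N-K}(x)+\sum_{j=N-K+1}^N\Big(\frac{N-K}{1+\delta}-Z\Big)\frac{1}{|x|_j}.$$
   Context: For $x=(x_1,\dots,x_N)\in\mathbb R^{3N}$ with $x_j\in\mathbb R^3$, $|x|_k$ denotes the $k$-th smallest of $|x_1|,\dots,|x_N|$, counted with multiplicity, so that $|x|_1\le\dots\le|x|_N$. Let $\Omega=\{x\in\mathbb R^{3N}: |x|_1<|x|_2<\dots<|x|_N\}$. On $\Omega$, let $\tilde x_j$ denote the unique coordinate $x_i$ with $|x_i|=|x|_j$. For $0\le M\le N$, $$U_M(x)=\sum_{j=1}^M-\frac{Z}{|x|_j}+\sum_{j\neq k,\ j,k\le M}\frac{1}{|\tilde x_j-\tilde x_k|},$$ with $U_0=0$. This is the potential of the $M$ innermost electrons. *)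

From Stdlib Require Import Reals Lra Lia Arith.
Open Scope R_scope.

Definition vec3 : Type := (R * R * R)%type.

Definition norm3 (v : vec3) : R :=
  let '(a, b, c) := v in sqrt (a * a + b * b + c * c).

Definition sub3 (v w : vec3) : vec3 :=
  let '(a, b, c) := v in let '(a', b', c') := w in (a - a', b - b', c - c').

Definition dist3 (v w : vec3) : R := norm3 (sub3 v w).

Fixpoint sumR (f : nat -> R) (n : nat) : R :=
  match n with
  | O => 0
  | S m => sumR f m + f m
  end.

(* sum_{j=a}^{b} f j  (inclusive; empty if b < a) *)
Definition sum_from_to (f : nat -> R) (a b : nat) : R :=
  sumR (fun i => f (a + i)%nat) (S b - a).

(* A configuration x = (x_1,...,x_N) is stored 0-based: x_j is [x (j-1)].
   [sorting N x sigma]: sigma is a permutation of {0,...,N-1} listing the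
   particles by strictly increasing distance to the origin. Such a sigma
   exists iff x lies in Omega, and it is then unique. *)
Definition sorting (N : nat) (x : nat -> vec3) (sigma : nat -> nat) : Prop :=
  (forall i, (i < N)%nat -> (sigma i < N)%nat) /\
  (forall i j, (i < N)%nat -> (j < N)%nat -> sigma i = sigma j -> i = j) /\
  (forall i, (S i < N)%nat -> norm3 (x (sigma i)) < norm3 (x (sigma (S i)))).

Definition in_Omega (N : nat) (x : nat -> vec3) : Prop :=
  exists sigma, sorting N x sigma.

(* |x|_k (1-based k) and \tilde x_k, given the sorting permutation *)
Definition xt (x : nat -> vec3) (sigma : nat -> nat) (k : nat) : vec3 :=
  x (sigma (k - 1)%nat).
Definition rn (x : nat -> vec3) (sigma : nat -> nat) (k : nat) : R :=
  norm3 (xt x sigma k).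

Definition U (N : nat) (Z : R) (x : nat -> vec3) : R :=
  sumR (fun j => - Z / norm3 (x j)) N +
  sumR (fun j => sumR (fun k =>
          if Nat.eq_dec j k then 0 else 1 / dist3 (x j) (x k)) N) N.

Definition UM (Z : R) (x : nat -> vec3) (sigma : nat -> nat) (M : nat) : R :=
  sum_from_to (fun j => - Z / rn x sigma j) 1 M +
  sum_from_to (fun j => sum_from_to (fun k =>
          if Nat.eq_dec j k then 0 else 1 / dist3 (xt x sigma j) (xt x sigma k)) 1 M) 1 M.

From Pilot Require Import Defs.
From Stdlib Require Import Reals Lra Lia List Permutation.
Open Scope R_scope.

(* Relabel the electrons in order of increasing distance to the
   nucleus, y a := x (sigma a); the full potential U is invariant under this
   relabelling and U_M is exactly the potential of the first M relabelled
   electrons.  Since every electron-electron repulsion is nonnegative, the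
   potential of N electrons is at least the potential of the M innermost ones
   plus, for each outer electron, its nuclear attraction and its repulsion
   with the M inner electrons (the repulsions among outer electrons and the
   repulsions felt by inner electrons from outer ones are dropped).
   - If |x|_{N-K} > delta |x|_{N-K+1}, take M = N-K-1, drop all repulsions of
     the outer electrons and bound the attraction of electron N-K by
     Z / (delta |x|_{N-K+1}).
   - If |x|_{N-K} < delta |x|_{N-K+1}, take M = N-K; an inner electron w and an
     outer electron v satisfy |w| <= delta |v|, hence |v - w| <= (1+delta)|v|
     and each of the M repulsions felt by v is at least 1/((1+delta)|v|). *)

Lemma sumR_ext (f g : nat -> R) (n : nat) :
  (forall i, (i < n)%nat -> f i = g i) -> sumR f n = sumR g n.
Proof.
  induction n as [|n IH]; intros Hfg; simpl; [reflexivity|].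
  rewrite IH by (intros; apply Hfg; lia); rewrite Hfg by lia; reflexivity.
Qed.

Lemma sumR_le (f g : nat -> R) (n : nat) :
  (forall i, (i < n)%nat -> f i <= g i) -> sumR f n <= sumR g n.
Proof.
  induction n as [|n IH]; intros Hfg; simpl; [lra|].
  apply Rplus_le_compat; [apply IH; intros; apply Hfg; lia | apply Hfg; lia].
Qed.

Lemma sumR_plus (f g : nat -> R) (n : nat) :
  sumR (fun i => f i + g i) n = sumR f n + sumR g n.
Proof. induction n as [|n IH]; simpl; [lra | rewrite IH; lra]. Qed.

Lemma sumR_opp (f : nat -> R) (n : nat) : sumR (fun i => - f i) n = - sumR f n.
Proof. induction n as [|n IH]; simpl; [lra | rewrite IH; lra]. Qed.

Lemma sumR_const (c : R) (n : nat) : sumR (fun _ => c) n = INR n * c.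
Proof. induction n as [|n IH]; simpl sumR; [simpl; lra | rewrite IH, S_INR; lra]. Qed.

Lemma sumR_nonneg (f : nat -> R) (n : nat) :
  (forall i, (i < n)%nat -> 0 <= f i) -> 0 <= sumR f n.
Proof.
  intros Hf. rewrite <- (Rmult_0_r (INR n)), <- sumR_const. now apply sumR_le.
Qed.

Lemma sumR_split (f : nat -> R) (m n : nat) :
  sumR f (m + n) = sumR f m + sumR (fun i => f (m + i)%nat) n.
Proof.
  induction n as [|n IH]; simpl.
  - rewrite Nat.add_0_r; lra.
  - rewrite Nat.add_succ_r; simpl; rewrite IH; lra.
Qed.

(* Sums over lists, used only to reindex a sum along a permutation. *)
Definition lsum (f : nat -> R) (l : list nat) : R :=
  fold_right (fun i acc => f i + acc) 0 l.

Lemma sumR_lsum (f : nat -> R) (n : nat) : sumR f n = lsum f (seq 0 n).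
Proof.
  assert (Hsnoc : forall l m, lsum f (l ++ m :: nil) = lsum f l + f m)
    by (induction l as [|a l IHl]; intros m; simpl; [lra | rewrite IHl; lra]).
  induction n as [|n IH]; [reflexivity|].
  cbn [sumR]; rewrite seq_S, Hsnoc, IH; reflexivity.
Qed.

Lemma sumR_perm (N : nat) (sigma : nat -> nat) (f : nat -> R) :
  (forall i, (i < N)%nat -> (sigma i < N)%nat) ->
  (forall i j, (i < N)%nat -> (j < N)%nat -> sigma i = sigma j -> i = j) ->
  sumR f N = sumR (fun a => f (sigma a)) N.
Proof.
  intros Hrange Hinj.
  assert (Hmap : forall l, lsum f (map sigma l) = lsum (fun a => f (sigma a)) l)
    by (induction l as [|a l IHl]; simpl; congruence).
  assert (Hperm : Permutation (map sigma (seq 0 N)) (seq 0 N)).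
  { apply Permutation_map_same_l.
    - apply FinFun.Injective_map_NoDup_in; [|apply seq_NoDup].
      intros a b Ha Hb; apply in_seq in Ha; apply in_seq in Hb; apply Hinj; lia.
    - intros y Hy; apply in_map_iff in Hy as [a [<- Ha]].
      apply in_seq in Ha; apply in_seq; specialize (Hrange a); lia. }
  assert (Hlsum_perm : forall l l', Permutation l l' -> lsum f l = lsum f l')
    by (induction 1; simpl; lra).
  rewrite !sumR_lsum, <- Hmap; symmetry; exact (Hlsum_perm _ _ Hperm).
Qed.

Lemma norm3_nonneg (v : vec3) : 0 <= norm3 v.
Proof. destruct v as [[a b] c]; apply sqrt_pos. Qed.

Lemma dist3_nonneg (v w : vec3) : 0 <= dist3 v w.
Proof. apply norm3_nonneg. Qed.

(* The triangle inequality |v - w| <= |v| + |w|, via Cauchy-Schwarz in the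
   form  -(v.w) <= |v| |w|  (Lagrange's identity gives (v.w)^2 <= |v|^2|w|^2). *)
Lemma dist3_le_norm3_add (v w : vec3) : dist3 v w <= norm3 v + norm3 w.
Proof.
  destruct v as [[a1 a2] a3], w as [[b1 b2] b3]; unfold dist3; simpl.
  set (B := a1*a1 + a2*a2 + a3*a3); set (C := b1*b1 + b2*b2 + b3*b3).
  set (t := a1*b1 + a2*b2 + a3*b3).
  assert (HB : 0 <= B) by (unfold B; nra).
  assert (HC : 0 <= C) by (unfold C; nra).
  assert (Hcs : - t <= sqrt B * sqrt C).
  { rewrite <- sqrt_mult_alt by exact HB.
    apply (Rle_trans _ (Rabs t)); [rewrite <- Rabs_Ropp; apply Rle_abs|].
    rewrite <- sqrt_Rsqr_abs; apply sqrt_le_1_alt; unfold Rsqr.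
    assert (Hlagrange : B * C - t * t =
      (a1*b2 - a2*b1)^2 + (a1*b3 - a3*b1)^2 + (a2*b3 - a3*b2)^2)
      by (unfold B, C, t; ring).
    pose proof (pow2_ge_0 (a1*b2 - a2*b1)); pose proof (pow2_ge_0 (a1*b3 - a3*b1));
    pose proof (pow2_ge_0 (a2*b3 - a3*b2)); lra. }
  pose proof (sqrt_pos B); pose proof (sqrt_pos C).
  rewrite <- (sqrt_square (sqrt B + sqrt C)) by lra.
  apply sqrt_le_1_alt.
  pose proof (sqrt_sqrt B HB); pose proof (sqrt_sqrt C HC).
  replace ((a1 - b1) * (a1 - b1) + (a2 - b2) * (a2 - b2) + (a3 - b3) * (a3 - b3))
    with (B + C - 2 * t) by (unfold B, C, t; ring).
  nra.
Qed.

Lemma dist3_pos (v w : vec3) : norm3 v <> norm3 w -> 0 < dist3 v w.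
Proof.
  intros Hvw; destruct (Rle_lt_or_eq_dec _ _ (dist3_nonneg v w)) as [Hpos|H0]; [exact Hpos|].
  exfalso; apply Hvw; f_equal.
  destruct v as [[a1 a2] a3], w as [[b1 b2] b3]; unfold dist3 in H0; simpl in H0.
  pose proof (Rle_0_sqr (a1 - b1)); pose proof (Rle_0_sqr (a2 - b2));
    pose proof (Rle_0_sqr (a3 - b3)); unfold Rsqr in *.
  symmetry in H0; apply sqrt_eq_0 in H0; [|lra].
  assert (a1 = b1) by nra; assert (a2 = b2) by nra; assert (a3 = b3) by nra.
  now subst.
Qed.

Lemma inv_dist3_lower_bound (v w : vec3) (delta : R) :
  0 <= delta -> norm3 w < norm3 v -> norm3 w <= delta * norm3 v ->
  1 / ((1 + delta) * norm3 v) <= 1 / dist3 v w.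
Proof.
  intros Hdelta Hlt Hle.
  pose proof (dist3_pos v w ltac:(lra)) as Hd.
  pose proof (dist3_le_norm3_add v w).
  unfold Rdiv; rewrite !Rmult_1_l; apply Rinv_le_contravar; [exact Hd | lra].
Qed.

Definition coulomb_pair (y : nat -> vec3) (a b : nat) : R :=
  if Nat.eq_dec a b then 0 else 1 / dist3 (y a) (y b).

Definition Ufirst (Z : R) (y : nat -> vec3) (M : nat) : R :=
  sumR (fun a => - Z / norm3 (y a)) M + sumR (fun a => sumR (coulomb_pair y a) M) M.

Lemma coulomb_pair_nonneg (y : nat -> vec3) (a b : nat) : 0 <= coulomb_pair y a b.
Proof.
  unfold coulomb_pair; destruct Nat.eq_dec; [lra|].
  destruct (Rle_lt_or_eq_dec _ _ (dist3_nonneg (y a) (y b))) as [Hpos|H0].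
  - apply Rlt_le, Rdiv_lt_0_compat; lra.
  - rewrite <- H0; unfold Rdiv; rewrite Rinv_0; lra.
Qed.

Lemma Ufirst_split (Z : R) (y : nat -> vec3) (M L : nat) :
  Ufirst Z y (M + L) >= Ufirst Z y M +
    sumR (fun i => - Z / norm3 (y (M + i)%nat) + sumR (coulomb_pair y (M + i)) M) L.
Proof.
  assert (Hinner : forall a, sumR (coulomb_pair y a) M <= sumR (coulomb_pair y a) (M + L)).
  { intros a; rewrite sumR_split.
    pose proof (sumR_nonneg (fun i => coulomb_pair y a (M + i)) L
                  (fun i _ => coulomb_pair_nonneg y a (M + i))); lra. }
  unfold Ufirst.
  rewrite (sumR_split (fun a => - Z / norm3 (y a)) M L).
  rewrite (sumR_split (fun a => sumR (coulomb_pair y a) (M + L)) M L), sumR_plus.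
  pose proof (sumR_le (fun a => sumR (coulomb_pair y a) M) _ M (fun a _ => Hinner a)).
  pose proof (sumR_le (fun i => sumR (coulomb_pair y (M + i)) M) _ L
                (fun i _ => Hinner (M + i)%nat)).
  lra.
Qed.

Section Sorted.

Variables (N : nat) (y : nat -> vec3) (Z delta : R).
Hypothesis y_sorted : forall i, (S i < N)%nat -> norm3 (y i) < norm3 (y (S i)).
Hypothesis Z_pos : 0 < Z.
Hypothesis delta_pos : 0 < delta.

Lemma sorted_norm_lt (a b : nat) :
  (a < b)%nat -> (b < N)%nat -> norm3 (y a) < norm3 (y b).
Proof.
  induction 1 as [|b Hab IH]; intros Hb; [apply y_sorted; lia|].
  pose proof (IH ltac:(lia)); pose proof (y_sorted b Hb); lra.
Qed.

Lemma sorted_norm_le (a b : nat) :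
  (a <= b)%nat -> (b < N)%nat -> norm3 (y a) <= norm3 (y b).
Proof.
  intros Hab Hb; destruct (Nat.eq_dec a b) as [->|]; [lra|].
  apply Rlt_le, sorted_norm_lt; lia.
Qed.

Lemma Ufirst_bound_large_ratio (M K : nat) :
  (1 <= K)%nat -> (M + 1 + K = N)%nat -> norm3 (y M) > delta * norm3 (y (M + 1)%nat) ->
  Ufirst Z y N >= Ufirst Z y M - Z / (delta * norm3 (y (M + 1)%nat))
                  - sumR (fun i => Z / norm3 (y (M + 1 + i)%nat)) K.
Proof.
  intros HK HN Hratio.
  assert (Hattr : - Z / norm3 (y M) >= - Z / (delta * norm3 (y (M + 1)%nat))).
  { pose proof (norm3_nonneg (y M)).
    pose proof (sorted_norm_lt M (M + 1) ltac:(lia) ltac:(lia)).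
    assert (Hd : 0 < delta * norm3 (y (M + 1)%nat)) by (apply Rmult_lt_0_compat; lra).
    assert (HrM : 0 < norm3 (y M)) by lra.
    pose proof (Rinv_lt_contravar _ _ (Rmult_lt_0_compat _ _ Hd HrM) Hratio).
    unfold Rdiv; nra. }
  assert (Hrest : sumR (fun i => - Z / norm3 (y (M + 1 + i)%nat)) K
                  = - sumR (fun i => Z / norm3 (y (M + 1 + i)%nat)) K).
  { rewrite <- sumR_opp; apply sumR_ext; intros i _; unfold Rdiv; ring. }
  pose proof (Ufirst_split Z y M (1 + K)) as Hsplit.
  replace (M + (1 + K))%nat with N in Hsplit by lia.
  assert (Hdrop : sumR (fun i => - Z / norm3 (y (M + i)%nat)) (1 + K) <=
      sumR (fun i => - Z / norm3 (y (M + i)%nat) + sumR (coulomb_pair y (M + i)) M) (1 + K)).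
  { apply sumR_le; intros i _.
    pose proof (sumR_nonneg _ M (fun b _ => coulomb_pair_nonneg y (M + i) b)); lra. }
  rewrite sumR_split in Hdrop; simpl (sumR _ 1) in Hdrop.
  rewrite Nat.add_0_r in Hdrop.
  erewrite sumR_ext in Hdrop by (intros i _; rewrite Nat.add_assoc; reflexivity).
  lra.
Qed.

Lemma Ufirst_bound_small_ratio (M K : nat) :
  (M + K = N)%nat -> (1 <= M)%nat -> norm3 (y (M - 1)%nat) < delta * norm3 (y M) ->
  Ufirst Z y N >= Ufirst Z y M +
    sumR (fun i => (INR M / (1 + delta) - Z) * (1 / norm3 (y (M + i)%nat))) K.
Proof.
  intros HN HM Hratio.
  assert (Hrepulsion : forall i, (i < K)%nat ->
      INR M * (1 / ((1 + delta) * norm3 (y (M + i)%nat))) <= sumR (coulomb_pair y (M + i)) M).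
  { intros i Hi; rewrite <- sumR_const; apply sumR_le; intros b Hb.
    unfold coulomb_pair; destruct Nat.eq_dec; [lia|].
    pose proof (sorted_norm_le b (M - 1) ltac:(lia) ltac:(lia)).
    pose proof (sorted_norm_le M (M + i) ltac:(lia) ltac:(lia)).
    apply inv_dist3_lower_bound; [lra | apply sorted_norm_lt; lia | nra]. }
  pose proof (Ufirst_split Z y M K) as Hsplit; rewrite HN in Hsplit.
  enough (sumR (fun i => (INR M / (1 + delta) - Z) * (1 / norm3 (y (M + i)%nat))) K <=
          sumR (fun i => - Z / norm3 (y (M + i)%nat) + sumR (coulomb_pair y (M + i)) M) K)
    by lra.
  apply sumR_le; intros i Hi; specialize (Hrepulsion i Hi).
  unfold Rdiv in *; rewrite Rinv_mult in Hrepulsion; lra.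
Qed.

End Sorted.

Lemma U_relabel (N : nat) (Z : R) (x : nat -> vec3) (sigma : nat -> nat) :
  sorting N x sigma -> U N Z x = Ufirst Z (fun a => x (sigma a)) N.
Proof.
  intros [Hrange [Hinj _]]; unfold U, Ufirst, coulomb_pair.
  f_equal; rewrite (sumR_perm N sigma) by assumption; [reflexivity|].
  apply sumR_ext; intros a Ha; rewrite (sumR_perm N sigma) by assumption.
  apply sumR_ext; intros b Hb.
  destruct (Nat.eq_dec (sigma a) (sigma b)) as [E|], (Nat.eq_dec a b); subst; try reflexivity.
  - now pose proof (Hinj a b Ha Hb E).
  - congruence.
Qed.

Lemma UM_relabel (Z : R) (x : nat -> vec3) (sigma : nat -> nat) (M : nat) :
  UM Z x sigma M = Ufirst Z (fun a => x (sigma a)) M.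
Proof.
  unfold UM, Ufirst, sum_from_to, rn, Defs.xt, coulomb_pair.
  replace (S M - 1)%nat with M by lia.
  assert (Hshift : forall a, (1 + a - 1)%nat = a) by lia.
  f_equal; apply sumR_ext; intros a _; rewrite ?Hshift; [reflexivity|].
  apply sumR_ext; intros b _; rewrite !Hshift.
  destruct (Nat.eq_dec (1 + a) (1 + b)), (Nat.eq_dec a b); reflexivity || lia.
Qed.

Lemma rn_succ (x : nat -> vec3) (sigma : nat -> nat) (k : nat) :
  rn x sigma (k + 1) = norm3 (x (sigma k)).
Proof. unfold rn, Defs.xt; now rewrite Nat.add_sub. Qed.

Lemma sum_from_to_rn (g : R -> R) (x : nat -> vec3) (sigma : nat -> nat) (P K Q : nat) :
  Q = (P + K)%nat ->
  sum_from_to (fun j => g (rn x sigma j)) (P + 1) Q =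
  sumR (fun i => g (norm3 (x (sigma (P + i)%nat)))) K.
Proof.
  intros ->; unfold sum_from_to; replace (S (P + K) - (P + 1))%nat with K by lia.
  apply sumR_ext; intros i _; replace (P + 1 + i)%nat with (P + i + 1)%nat by lia.
  now rewrite rn_succ.
Qed.

Theorem lemma3 (N K : nat) (Z delta : R) (x : nat -> vec3) (sigma : nat -> nat) :
  (2 <= N)%nat -> (1 <= K)%nat -> (K <= N - 1)%nat ->
  0 < Z -> 0 < delta ->
  sorting N x sigma ->
  (forall j, (j < N)%nat -> norm3 (x j) <> 0) ->
  (rn x sigma (N - K) > delta * rn x sigma (N - K + 1) ->
     U N Z x >= UM Z x sigma (N - K - 1) - Z / (delta * rn x sigma (N - K + 1))
                 - sum_from_to (fun j => Z / rn x sigma j) (N - K + 1) N) /\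
  (rn x sigma (N - K) < delta * rn x sigma (N - K + 1) ->
     U N Z x >= UM Z x sigma (N - K)
                 + sum_from_to (fun j => (INR (N - K) / (1 + delta) - Z) * (1 / rn x sigma j))
                     (N - K + 1) N).
Proof.
  intros HN HK1 HK2 HZ Hdelta Hsort _.
  pose proof Hsort as (_ & _ & Hsorted).
  rewrite (U_relabel N Z x sigma Hsort), !UM_relabel.
  split; intros Hratio.
  - (* inner electrons 1..N-K-1, electron N-K separated by the gap *)
    set (M := (N - K - 1)%nat).
    replace (N - K)%nat with (M + 1)%nat in * by lia.
    rewrite (sum_from_to_rn (fun r => Z / r) x sigma (M + 1) K N) by lia.
    rewrite !rn_succ in *.
    eapply Ufirst_bound_large_ratio; eauto; lia.
  -
    set (M := (N - K)%nat) in *.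
    rewrite (sum_from_to_rn (fun r => (INR M / (1 + delta) - Z) * (1 / r)) x sigma M K N)
      by lia.
    rewrite rn_succ in *.
    eapply Ufirst_bound_small_ratio; eauto; lia.
Qed.
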